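(* Let $(S^d,T^d)_{d\in\{1,\dots,D\}}$ be period counters for $N$ workers and $D$ days. Then $T^1=0$ and for all $1\le d\le D-1$: $S^d\le S^{d+1}$, $\;T^d\le T^{d+1}$, $\;T^{d+1}\le S^d$, and $\;S^{d+1}\le T^d+N$.
   Context: A schedule for $N$ workers on $D$ days is any map $f:\{n_1,\dots,n_N\}\times\{1,\dots,D\}\to\{\mathrm{ON},\mathrm{OFF}\}$. A work period of a worker is an inclusion-wise maximal set of consecutive days on which the worker is ON. Integers $(S^d,T^d)_{d\in\{1,\dots,D\}}$ are called period counters if there exists some schedule for $N$ workers on $D$ days such that for each $d$, $S^d$ is the number of work periods (over all workers) whose first day is among days $1,\dots,d$, and $T^d$ is the number of work periods whose last day is among days $1,\dots,d-1$; the counters are then said to represent that schedule. *)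

From mathcomp Require Import all_boot.
Set Implicit Arguments. Unset Strict Implicit. Unset Printing Implicit Defensive.

(* A schedule for N workers on D days: worker i is ON on day d iff f i d,
   where days are 1..D; values of f outside 1..D are irrelevant. *)
Definition schedule (N : nat) := 'I_N -> nat -> bool.

Definition starts_on (N D : nat) (f : schedule N) (i : 'I_N) (d : nat) : bool :=
  [&& 1 <= d, d <= D, f i d & (d == 1) || ~~ f i d.-1].

Definition ends_on (N D : nat) (f : schedule N) (i : 'I_N) (d : nat) : bool :=
  [&& 1 <= d, d <= D, f i d & (d == D) || ~~ f i d.+1].

Definition S_count (N D : nat) (f : schedule N) (d : nat) : nat :=
  \sum_(i < N) \sum_(1 <= e < d.+1) starts_on D f i e.

Definition T_count (N D : nat) (f : schedule N) (d : nat) : nat :=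
  \sum_(i < N) \sum_(1 <= e < d) ends_on D f i e.

Definition period_counters (N D : nat) (S T : nat -> nat) : Prop :=
  exists f : schedule N,
    forall d, 1 <= d <= D -> S d = S_count D f d /\ T d = T_count D f d.

From mathcomp Require Import all_boot zify.

Set Implicit Arguments.
Unset Strict Implicit.
Unset Printing Implicit Defensive.

(* Per worker, the periods started by day d but not ended before day d are
   exactly the one containing day d, if any: so S^d - T^d counts the workers
   that are ON on day d.  Everything follows from this and the facts that a
   period only starts or ends on an ON day, and starts only after an OFF day. *)

Section OneWorker.
Variables (N D : nat) (f : schedule N) (i : 'I_N).

Definition starts_upto (d : nat) : nat := \sum_(1 <= e < d.+1) starts_on D f i e.
Definition ends_before (d : nat) : nat := \sum_(1 <= e < d) ends_on D f i e.

Lemma starts_uptoS d : starts_upto d.+1 = starts_upto d + starts_on D f i d.+1.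
Proof. by rewrite /starts_upto big_nat_recr. Qed.

Lemma ends_beforeS d : 1 <= d -> ends_before d.+1 = ends_before d + ends_on D f i d.
Proof. by move=> d_ge1; rewrite /ends_before big_nat_recr. Qed.

Lemma ends_before1 : ends_before 1 = 0.
Proof. by rewrite /ends_before big_geq. Qed.

Lemma ends_on_ON d : ends_on D f i d -> f i d.
Proof. by case/and4P. Qed.

Lemma starts_on_after_OFF d : 1 <= d -> starts_on D f i d.+1 -> ~~ f i d.
Proof. by case: d => // d _ /and4P[_ _ _]. Qed.

Lemma starts_upto_ends_before d :
  1 <= d <= D -> starts_upto d = ends_before d + f i d.
Proof.
elim: d => // -[_ /andP[_ D_ge1] | d IH /andP[_ d_ltD]].
  by rewrite ends_before1 /starts_upto big_nat1 /starts_on D_ge1 andbT.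
rewrite starts_uptoS ends_beforeS // IH ?(ltnW d_ltD) // -!addnA; congr (_ + _).
rewrite /starts_on /ends_on d_ltD (ltnW d_ltD) /= (ltn_eqF d_ltD).
by case: (f i d.+1); case: (f i d.+2).
Qed.

Lemma period_counts_step d : 1 <= d < D ->
  [/\ starts_upto d <= starts_upto d.+1, ends_before d <= ends_before d.+1,
      ends_before d.+1 <= starts_upto d & starts_upto d.+1 <= ends_before d + 1].
Proof.
move=> /andP[d_ge1 d_ltD].
have open_d : starts_upto d = ends_before d + f i d.
  by apply: starts_upto_ends_before; rewrite d_ge1 ltnW.
rewrite starts_uptoS ends_beforeS // leq_addr leq_addr open_d leq_add2l.
split=> //; first by case: (boolP (ends_on D f i d)) => // /ends_on_ON ->.
case: (boolP (starts_on D f i d.+1)) => [/(starts_on_after_OFF d_ge1)/negbTE ->|_].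
  by rewrite addn0.
by rewrite !addn0 leq_add2l leq_b1.
Qed.

End OneWorker.

Theorem lemma5p4 (N D : nat) (S T : nat -> nat) :
  1 <= D ->
  period_counters N D S T ->
  T 1 = 0 /\
  (forall d, 1 <= d <= D.-1 ->
     [/\ S d <= S d.+1, T d <= T d.+1, T d.+1 <= S d & S d.+1 <= T d + N]).
Proof.
move=> D_ge1 [f counts]; split.
  have [_ ->] := counts 1 (D_ge1 : 1 <= 1 <= D).
  by apply: big1 => i _; apply: ends_before1.
move=> d d_range; have d_ltD : 1 <= d < D by lia.
have [-> ->] := counts d ltac:(lia); have [-> ->] := counts d.+1 ltac:(lia).
have step i := period_counts_step f i d_ltD.
split; try by apply: leq_sum => i _; case: (step i).
rewrite -[N in _ + N]card_ord -sum1_card -big_split.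
by apply: leq_sum => i _; case: (step i).
Qed.
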